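(* Let $I$ be a compact interval, $J\subseteq I$ a nonempty open interval, $S\subseteq\mathrm{Homeo}_+(I)$ a finite set, $\tau\in(0,1)$, and $(s_n)_{n\ge1}$ an infinite sequence in $S$ such that $\sum_{n\ge0}|s_n\cdots s_1J|^\tau<\infty$ (the $n=0$ term being $|J|^\tau$). If $c\in\mathrm{Homeo}_+(I)$ commutes with every element of $S$ and acts nontrivially on $J$ (i.e. $c(J)=J$ and $c|_J\neq\mathrm{id}$), then $S\cup\{c\}$ is a $(2,\tau)$-nesting. In particular, $S\cup\{c\}\not\subseteq\mathrm{Diff}_+^{1,\tau}(I)$.
   Context: $|\cdot|$ denotes length. $\mathrm{Diff}_+^{1,\tau}(I)$ is the group of orientation-preserving $C^1$-diffeomorphisms of $I$ with $\tau$-Hölder continuous derivative. For an integer $k\ge2$ and $u\in(0,1]$, a finite set $S\subseteq\mathrm{Homeo}_+(I)$ is a $(k,u)$-nesting if there exist nonempty open intervals $J_1\supsetneq\cdots\supsetneq J_k$ and an infinite sequence $(s_1,s_2,\ldots)$ in $S$ such that, with $w_n=s_n\cdots s_1$ ($w_0=\mathrm{id}$): (i) $\sum_{n\ge0}|w_nJ_1|^u<\infty$; (ii) for each $i=2,\ldots,k$ and $n\ge0$ some $s\in S$ satisfies $sw_nJ_i\cap w_nJ_i=\varnothing$ and $sw_nJ_{i-1}=w_nJ_{i-1}$. *)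

From Stdlib Require Import Reals List.
Open Scope R_scope.

Definition rset := R -> Prop.

Definition in_I (a b x : R) : Prop := a <= x <= b.

Definition oint (p q : R) : rset := fun x => p < x < q.

Definition img (f : R -> R) (A : rset) : rset := fun y => exists x, A x /\ f x = y.

Definition set_eq (A B : rset) : Prop := forall x, A x <-> B x.
Definition set_sub (A B : rset) : Prop := forall x, A x -> B x.
Definition set_disj (A B : rset) : Prop := forall x, ~ (A x /\ B x).

Definition cont_on (a b : R) (f : R -> R) : Prop :=
  forall x, in_I a b x -> forall eps, 0 < eps -> exists delta, 0 < delta /\
    forall y, in_I a b y -> Rabs (y - x) < delta -> Rabs (f y - f x) < eps.

Definition homeo_plus (a b : R) (f : R -> R) : Prop :=
  (forall x, in_I a b x -> in_I a b (f x)) /\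
  (exists g : R -> R,
      (forall y, in_I a b y -> in_I a b (g y)) /\
      (forall x, in_I a b x -> g (f x) = x) /\
      (forall y, in_I a b y -> f (g y) = y) /\
      cont_on a b f /\ cont_on a b g) /\
  (forall x y, in_I a b x -> in_I a b y -> x < y -> f x < f y).

(* f is in Diff_+^{1,tau}(I): an orientation-preserving homeomorphism of I,
   differentiable on I (one-sided at the endpoints) with derivative df that
   is positive (so that f is a C^1-diffeomorphism) and tau-Hoelder. *)
Definition diff1tau (a b tau : R) (f : R -> R) : Prop :=
  homeo_plus a b f /\
  exists df : R -> R,
    (forall x, in_I a b x -> forall eps, 0 < eps -> exists delta, 0 < delta /\
       forall y, in_I a b y -> y <> x -> Rabs (y - x) < delta ->
         Rabs ((f y - f x) / (y - x) - df x) < eps) /\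
    (forall x, in_I a b x -> 0 < df x) /\
    (exists C, forall x y, in_I a b x -> in_I a b y -> x <> y ->
       Rabs (df x - df y) <= C * Rpower (Rabs (x - y)) tau).

Fixpoint word (s : nat -> R -> R) (n : nat) : R -> R :=
  match n with
  | O => fun x => x
  | S m => fun x => s (S m) (word s m x)
  end.

Definition summable (u : nat -> R) : Prop := exists l, Un_cv (sum_f_R0 u) l.

(* The intervals J_1 ⊋ ... ⊋ J_k are J i = (fst (J i), snd (J i))
   for i = 1..k, nonempty open subintervals of I.  Since each w_n is an
   increasing homeomorphism of I, |w_n J_1| = w_n(q_1) - w_n(p_1). *)
Definition nesting (a b : R) (Sg : list (R -> R)) (k : nat) (u : R) : Prop :=
  exists (J : nat -> R * R) (s : nat -> R -> R),
    (forall i, (1 <= i <= k)%nat ->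
       a <= fst (J i) /\ fst (J i) < snd (J i) /\ snd (J i) <= b) /\
    (forall i, (1 <= i < k)%nat ->
       set_sub (oint (fst (J (S i))) (snd (J (S i)))) (oint (fst (J i)) (snd (J i))) /\
       ~ set_eq (oint (fst (J (S i))) (snd (J (S i)))) (oint (fst (J i)) (snd (J i)))) /\
    (forall n, (1 <= n)%nat -> In (s n) Sg) /\
    summable (fun n => Rpower (word s n (snd (J 1%nat)) - word s n (fst (J 1%nat))) u) /\
    (forall i n, (2 <= i <= k)%nat ->
       exists t, In t Sg /\
         set_disj (img t (img (word s n) (oint (fst (J i)) (snd (J i)))))
                  (img (word s n) (oint (fst (J i)) (snd (J i)))) /\
         set_eq (img t (img (word s n) (oint (fst (J (pred i))) (snd (J (pred i))))))
                (img (word s n) (oint (fst (J (pred i))) (snd (J (pred i)))))).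

From Stdlib Require Import Reals List Lra Lia.
Open Scope R_scope.

(** Let c move a point x0 of J = (p, q).

    Nesting: by continuity c pushes a small interval J2 around x0 off itself, and since c
    commutes with every word w_n it pushes w_n J2 off itself while preserving w_n J.

    Regularity: a C^{1,tau} diffeomorphism distorts slopes on an interval of length h by a
    factor at most 1 + M h^tau.  Hence the words w_n have distortion at most
    K = exp (M sum_k |w_k J|^tau) on J, uniformly in n, and conjugating c^m by a word w_n
    with |w_n J| small enough shows that every iterate c^m has distortion at most e K^2 on J.
    Now c^m maps [c^-m x0, c^(1-m) x0] onto [x0, c x0] and [x0, c x0] onto
    [c^m x0, c^(m+1) x0], so the product of the lengths of the two outer intervals is bounded
    below; but the intervals [c^-m x0, c^(1-m) x0] are disjoint subintervals of J. *)

Definition maps_to (A B : rset) (f : R -> R) : Prop := forall x, A x -> B (f x).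

Definition increasing_on (A : rset) (f : R -> R) : Prop :=
  forall x y, A x -> A y -> x < y -> f x < f y.

Definition commute_on (A : rset) (f g : R -> R) : Prop := forall x, A x -> f (g x) = g (f x).

Lemma homeo_plus_maps_to a b f : homeo_plus a b f -> maps_to (in_I a b) (in_I a b) f.
Proof. now intros [H _]. Qed.

Lemma homeo_plus_increasing a b f : homeo_plus a b f -> increasing_on (in_I a b) f.
Proof. now intros [_ [_ H]]. Qed.

Lemma oint_sub_in_I a b p q : a <= p -> q <= b -> set_sub (oint p q) (in_I a b).
Proof. intros Hp Hq x [Hx1 Hx2]; unfold in_I; lra. Qed.

Lemma increasing_on_sub A B f : set_sub A B -> increasing_on B f -> increasing_on A f.
Proof. intros HAB Hf x y Hx Hy; apply Hf; auto. Qed.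

Lemma increasing_on_oint a b p q f :
  a <= p -> q <= b -> increasing_on (in_I a b) f -> increasing_on (oint p q) f.
Proof. intros Hp Hq; apply increasing_on_sub, oint_sub_in_I; auto. Qed.

Lemma increasing_on_neq A f x y : increasing_on A f -> A x -> A y -> x <> y -> f x <> f y.
Proof.
  intros Hf Hx Hy Hxy.
  destruct (Rtotal_order x y) as [H | [H | H]]; [| contradiction |].
  - specialize (Hf x y Hx Hy H); lra.
  - specialize (Hf y x Hy Hx H); lra.
Qed.

Lemma maps_to_iter A f : maps_to A A f -> forall m, maps_to A A (Nat.iter m f).
Proof. intros Hf m; induction m as [|m IH]; intros x Hx; simpl; auto. Qed.

Lemma increasing_on_iter A f :
  maps_to A A f -> increasing_on A f -> forall m, increasing_on A (Nat.iter m f).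
Proof.
  intros Hm Hf m; induction m as [|m IH]; intros x y Hx Hy Hxy; simpl; auto.
  apply Hf; auto; apply maps_to_iter; auto.
Qed.

Lemma commute_on_iter A f g :
  maps_to A A f -> commute_on A f g -> forall m, commute_on A (Nat.iter m f) g.
Proof.
  intros Hm Hfg m; induction m as [|m IH]; intros x Hx; simpl; auto.
  rewrite IH, Hfg by (auto; apply maps_to_iter; auto); reflexivity.
Qed.

Lemma iter_cancel A f g :
  maps_to A A g -> (forall y, A y -> f (g y) = y) ->
  forall m y, A y -> Nat.iter m f (Nat.iter m g y) = y.
Proof.
  intros Hg Hfg m; induction m as [|m IH]; intros y Hy; [reflexivity |].
  rewrite Nat.iter_succ_r; simpl.
  rewrite Hfg by (apply maps_to_iter; auto); auto.
Qed.

Section Words.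

Variables (A : rset) (s : nat -> R -> R).
Hypothesis s_maps : forall n, (1 <= n)%nat -> maps_to A A (s n).

Lemma maps_to_word n : maps_to A A (word s n).
Proof. induction n as [|n IH]; intros x Hx; simpl; auto; apply s_maps; [lia | auto]. Qed.

Lemma increasing_on_word :
  (forall n, (1 <= n)%nat -> increasing_on A (s n)) -> forall n, increasing_on A (word s n).
Proof.
  intros Hs n; induction n as [|n IH]; intros x y Hx Hy Hxy; simpl; auto.
  apply Hs; [lia | apply maps_to_word | apply maps_to_word | apply IH]; auto.
Qed.

Lemma commute_on_word c :
  (forall n, (1 <= n)%nat -> commute_on A c (s n)) -> forall n, commute_on A c (word s n).
Proof.
  intros Hc n; induction n as [|n IH]; intros x Hx; simpl; auto.
  rewrite Hc, IH by (try lia; try apply maps_to_word; auto); reflexivity.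
Qed.

End Words.

Definition slope (f : R -> R) (x y : R) : R := (f y - f x) / (y - x).

Lemma slope_sym f x y : x <> y -> slope f x y = slope f y x.
Proof. intros; unfold slope; field; lra. Qed.

Lemma slope_pos A f x y : increasing_on A f -> A x -> A y -> x <> y -> 0 < slope f x y.
Proof.
  intros Hf Hx Hy Hxy.
  destruct (Rtotal_order x y) as [H | [H | H]]; [| contradiction |].
  - specialize (Hf x y Hx Hy H); apply Rdiv_lt_0_compat; lra.
  - specialize (Hf y x Hy Hx H); rewrite slope_sym by auto; apply Rdiv_lt_0_compat; lra.
Qed.

Lemma slope_comp f g x y :
  x <> y -> f x <> f y -> slope (fun z => g (f z)) x y = slope g (f x) (f y) * slope f x y.
Proof. intros; unfold slope; field; split; lra. Qed.

Definition distortion_bound (f : R -> R) (A : rset) (D : R) : Prop :=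
  forall x y u v, A x -> A y -> A u -> A v -> x <> y -> u <> v ->
    slope f x y <= D * slope f u v.

Lemma distortion_bound_id A : distortion_bound (fun x => x) A 1.
Proof. intros x y u v _ _ _ _ Hxy Huv; unfold slope; right; field; split; lra. Qed.

Lemma distortion_bound_le A f D D' :
  increasing_on A f -> D <= D' -> distortion_bound f A D -> distortion_bound f A D'.
Proof.
  intros Hf HD Hb x y u v Hx Hy Hu Hv Hxy Huv.
  pose proof (slope_pos A f u v Hf Hu Hv Huv).
  pose proof (Hb x y u v Hx Hy Hu Hv Hxy Huv); nra.
Qed.

Lemma distortion_bound_sub A B f D :
  set_sub A B -> distortion_bound f B D -> distortion_bound f A D.
Proof. intros HAB Hb x y u v Hx Hy Hu Hv; apply Hb; auto. Qed.

Lemma distortion_bound_comp A B f g D1 D2 :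
  maps_to A B f -> increasing_on A f -> increasing_on B g ->
  distortion_bound f A D1 -> distortion_bound g B D2 ->
  distortion_bound (fun x => g (f x)) A (D2 * D1).
Proof.
  intros Hm Hf Hg Hb1 Hb2 x y u v Hx Hy Hu Hv Hxy Huv.
  pose proof (increasing_on_neq A f x y Hf Hx Hy Hxy) as Hfxy.
  pose proof (increasing_on_neq A f u v Hf Hu Hv Huv) as Hfuv.
  rewrite (slope_comp f g x y), (slope_comp f g u v) by auto.
  pose proof (slope_pos B g (f x) (f y) Hg (Hm x Hx) (Hm y Hy) Hfxy).
  pose proof (slope_pos A f x y Hf Hx Hy Hxy).
  pose proof (Hb1 x y u v Hx Hy Hu Hv Hxy Huv).
  pose proof (Hb2 (f x) (f y) (f u) (f v) (Hm x Hx) (Hm y Hy) (Hm u Hu) (Hm v Hv) Hfxy Hfuv).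
  replace (D2 * D1 * (slope g (f u) (f v) * slope f u v))
    with ((D2 * slope g (f u) (f v)) * (D1 * slope f u v)) by ring.
  apply Rmult_le_compat; lra.
Qed.

Lemma distortion_bound_iter A f D :
  maps_to A A f -> increasing_on A f -> distortion_bound f A D ->
  forall m, distortion_bound (Nat.iter m f) A (D ^ m).
Proof.
  intros Hm Hf Hb m; induction m as [|m IH].
  - exact (distortion_bound_id A).
  - exact (distortion_bound_comp A A (Nat.iter m f) f (D ^ m) D
             (maps_to_iter A f Hm m) (increasing_on_iter A f Hm Hf m) Hf IH Hb).
Qed.

Lemma slope_commute A h W z z' :
  increasing_on A h -> increasing_on A W -> commute_on A h W -> A z -> A z' -> z <> z' ->
  slope h z z' * slope W (h z) (h z') = slope h (W z) (W z') * slope W z z'.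
Proof.
  intros Hh HW Hc Hz Hz' Hzz'.
  assert (E : slope (fun t => h (W t)) z z' = slope (fun t => W (h t)) z z')
    by (unfold slope; rewrite !Hc by auto; reflexivity).
  rewrite (slope_comp W h), (slope_comp h W) in E by eauto using increasing_on_neq.
  lra.
Qed.

(* By [slope_commute], a slope of h on A is a slope of h on W A times a ratio of two
   slopes of W on A. *)
Lemma distortion_bound_conj A h W K L :
  maps_to A A h -> increasing_on A h -> increasing_on A W -> commute_on A h W ->
  distortion_bound W A K -> distortion_bound h (img W A) L -> distortion_bound h A (K * K * L).
Proof.
  intros Hm Hh HW Hc HbW Hbh x y u v Hx Hy Hu Hv Hxy Huv.
  pose proof (increasing_on_neq A h x y Hh Hx Hy Hxy) as Hhxy.
  pose proof (increasing_on_neq A h u v Hh Hu Hv Huv) as Hhuv.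
  pose proof (slope_commute A h W x y Hh HW Hc Hx Hy Hxy) as E1.
  pose proof (slope_commute A h W u v Hh HW Hc Hu Hv Huv) as E2.
  pose proof (Hbh (W x) (W y) (W u) (W v) (ex_intro _ x (conj Hx eq_refl))
                (ex_intro _ y (conj Hy eq_refl)) (ex_intro _ u (conj Hu eq_refl))
                (ex_intro _ v (conj Hv eq_refl)) (increasing_on_neq A W x y HW Hx Hy Hxy)
                (increasing_on_neq A W u v HW Hu Hv Huv)) as Bh.
  pose proof (HbW x y u v Hx Hy Hu Hv Hxy Huv) as BW1.
  pose proof (HbW (h u) (h v) (h x) (h y) (Hm u Hu) (Hm v Hv) (Hm x Hx) (Hm y Hy) Hhuv Hhxy)
    as BW2.
  pose proof (slope_pos A h x y Hh Hx Hy Hxy).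
  pose proof (slope_pos A h u v Hh Hu Hv Huv).
  pose proof (slope_pos A W x y HW Hx Hy Hxy).
  pose proof (slope_pos A W u v HW Hu Hv Huv).
  pose proof (slope_pos A W (h x) (h y) HW (Hm x Hx) (Hm y Hy) Hhxy).
  pose proof (slope_pos A W (h u) (h v) HW (Hm u Hu) (Hm v Hv) Hhuv).
  assert (0 < slope h (W x) (W y)).
  { apply (Rmult_lt_reg_r (slope W x y)); [lra |]; rewrite <- E1, Rmult_0_l.
    apply Rmult_lt_0_compat; lra. }
  assert (0 < slope h (W u) (W v)).
  { apply (Rmult_lt_reg_r (slope W u v)); [lra |]; rewrite <- E2, Rmult_0_l.
    apply Rmult_lt_0_compat; lra. }
  assert (HK : 0 < K) by (apply (Rmult_lt_reg_r (slope W u v)); lra).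
  assert (HL : 0 < L) by (apply (Rmult_lt_reg_r (slope h (W u) (W v))); lra).
  apply (Rmult_le_reg_r (slope W (h x) (h y))); [lra |]; rewrite E1.
  apply Rle_trans with ((L * slope h (W u) (W v)) * (K * slope W u v));
    [apply Rmult_le_compat; lra |].
  replace (L * slope h (W u) (W v) * (K * slope W u v))
    with (K * L * slope h u v * slope W (h u) (h v))
    by (rewrite Rmult_assoc, E2; ring).
  replace (K * K * L * slope h u v * slope W (h x) (h y))
    with (K * L * slope h u v * (K * slope W (h x) (h y))) by ring.
  apply Rmult_le_compat_l; [apply Rmult_le_pos; [apply Rmult_le_pos |] |]; lra.
Qed.

Lemma Rpower_pos x y : 0 < Rpower x y.
Proof. apply exp_pos. Qed.

Lemma exp_le x y : x <= y -> exp x <= exp y.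
Proof. intros [H | ->]; [left; apply exp_increasing | right]; auto. Qed.

Lemma Rpower_lt_of_lt x e tau :
  0 < tau -> 0 < x -> 0 < e -> x < Rpower e (/ tau) -> Rpower x tau < e.
Proof.
  intros Htau Hx He Hxe.
  replace e with (Rpower (Rpower e (/ tau)) tau).
  - apply Rlt_Rpower_l; auto.
  - rewrite Rpower_mult, Rinv_l by lra; apply Rpower_1; auto.
Qed.

Definition holder_distortion (a b tau M : R) (f : R -> R) : Prop :=
  forall lo hi, a <= lo -> hi <= b ->
    distortion_bound f (oint lo hi) (1 + M * Rpower (hi - lo) tau).

Lemma holder_distortion_mono a b tau M M' f :
  increasing_on (in_I a b) f -> M <= M' ->
  holder_distortion a b tau M f -> holder_distortion a b tau M' f.
Proof.
  intros Hf HM Hd lo hi Hlo Hhi.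
  apply (distortion_bound_le _ _ (1 + M * Rpower (hi - lo) tau)).
  - exact (increasing_on_oint a b lo hi f Hlo Hhi Hf).
  - pose proof (Rpower_pos (hi - lo) tau); nra.
  - apply Hd; auto.
Qed.

Lemma holder_distortion_uniform a b tau (l : list (R -> R)) :
  (forall f, In f l ->
     increasing_on (in_I a b) f /\ exists M, 0 <= M /\ holder_distortion a b tau M f) ->
  exists M, 0 <= M /\ forall f, In f l -> holder_distortion a b tau M f.
Proof.
  induction l as [|g l IH]; intros Hl.
  - exists 0; split; [lra | intros f []].
  - destruct IH as [M1 [HM1 H1]]; [intros f Hf; apply Hl; right; auto |].
    destruct (Hl g (or_introl eq_refl)) as [Hg [M2 [HM2 H2]]].
    exists (Rmax M1 M2); split; [apply (Rle_trans _ M1); [auto | apply Rmax_l] |].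
    intros f [<- | Hf].
    + apply (holder_distortion_mono a b tau M2); auto; apply Rmax_r.
    + apply (holder_distortion_mono a b tau M1); auto; [apply Hl; right; auto | apply Rmax_l].
Qed.

Definition clamp (a b x : R) : R := Rmax a (Rmin b x).

Lemma clamp_in_I a b x : a <= b -> in_I a b (clamp a b x).
Proof. intros; unfold in_I, clamp, Rmax, Rmin; repeat destruct Rle_dec; lra. Qed.

Lemma clamp_id a b x : in_I a b x -> clamp a b x = x.
Proof. unfold in_I, clamp, Rmax, Rmin; intros; repeat destruct Rle_dec; lra. Qed.

Lemma clamp_dist a b x y : a <= b -> Rabs (clamp a b x - clamp a b y) <= Rabs (x - y).
Proof.
  intros; unfold clamp, Rmax, Rmin; repeat destruct Rle_dec;
    unfold Rabs; repeat destruct Rcase_abs; lra.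
Qed.

Lemma holder_continuity_pt a b tau C h :
  a <= b -> 0 < tau ->
  (forall x y, in_I a b x -> in_I a b y -> x <> y ->
     Rabs (h x - h y) <= C * Rpower (Rabs (x - y)) tau) ->
  forall z, continuity_pt (fun x => h (clamp a b x)) z.
Proof.
  intros Hab Htau Hh z.
  unfold continuity_pt, continue_in, limit1_in, limit_in; intros eps Heps.
  pose proof (Rabs_pos C).
  set (C' := Rabs C + 1).
  assert (HC' : 0 < eps / C') by (apply Rdiv_lt_0_compat; unfold C'; lra).
  exists (Rpower (eps / C') (/ tau)); split; [apply Rpower_pos |].
  intros x [_ Hx]; simpl in *; unfold R_dist in *.
  pose proof (clamp_dist a b x z Hab).
  set (x' := clamp a b x) in *; set (z' := clamp a b z) in *.
  destruct (Req_dec x' z') as [E | E].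
  { rewrite E, Rminus_diag, Rabs_R0; lra. }
  assert (Hpow : Rpower (Rabs (x' - z')) tau < eps / C').
  { apply Rpower_lt_of_lt; auto; [apply Rabs_pos_lt |]; lra. }
  pose proof (Hh x' z' (clamp_in_I a b x Hab) (clamp_in_I a b z Hab) E).
  pose proof (Rpower_pos (Rabs (x' - z')) tau).
  assert (C * Rpower (Rabs (x' - z')) tau <= Rabs C * (eps / C')).
  { apply Rle_trans with (Rabs C * Rpower (Rabs (x' - z')) tau).
    - apply Rmult_le_compat_r; [lra | apply Rle_abs].
    - apply Rmult_le_compat_l; lra. }
  assert (Rabs C * (eps / C') = eps - eps / C') by (unfold C'; field; lra).
  lra.
Qed.

Lemma holder_pos_bounded_below a b tau C h :
  a <= b -> 0 < tau -> (forall x, in_I a b x -> 0 < h x) ->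
  (forall x y, in_I a b x -> in_I a b y -> x <> y ->
     Rabs (h x - h y) <= C * Rpower (Rabs (x - y)) tau) ->
  exists d, 0 < d /\ forall x, in_I a b x -> d <= h x.
Proof.
  intros Hab Htau Hpos Hh.
  destruct (continuity_ab_min (fun x => h (clamp a b x)) a b Hab
              (fun z _ => holder_continuity_pt a b tau C h Hab Htau Hh z)) as [z [Hmin _]].
  exists (h (clamp a b z)); split; [apply Hpos, clamp_in_I; auto |].
  intros x Hx; rewrite <- (clamp_id a b x Hx); exact (Hmin x Hx).
Qed.

Lemma derivable_pt_lim_interior a b (f df : R -> R) :
  (forall x, in_I a b x -> forall eps, 0 < eps -> exists delta, 0 < delta /\
     forall y, in_I a b y -> y <> x -> Rabs (y - x) < delta ->
       Rabs ((f y - f x) / (y - x) - df x) < eps) ->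
  forall x, a < x < b -> derivable_pt_lim f x (df x).
Proof.
  intros Hd x Hx eps Heps.
  destruct (Hd x (conj (Rlt_le _ _ (proj1 Hx)) (Rlt_le _ _ (proj2 Hx))) eps Heps)
    as [delta [Hdelta H]].
  assert (Hr : 0 < Rmin delta (Rmin (x - a) (b - x))) by (repeat apply Rmin_pos; lra).
  exists (mkposreal _ Hr); intros h Hh0 Hh; simpl in Hh.
  pose proof (Rmin_l delta (Rmin (x - a) (b - x))).
  pose proof (Rmin_r delta (Rmin (x - a) (b - x))).
  pose proof (Rmin_l (x - a) (b - x)); pose proof (Rmin_r (x - a) (b - x)).
  pose proof (Rle_abs h); pose proof (Rle_abs (- h)); rewrite Rabs_Ropp in *.
  specialize (H (x + h)); replace (x + h - x) with h in H by ring.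
  apply H; [unfold in_I | |]; lra.
Qed.

Lemma slope_mvt (f df : R -> R) lo hi :
  (forall z, lo < z < hi -> derivable_pt_lim f z (df z)) ->
  forall x y, lo < x < hi -> lo < y < hi -> x <> y -> exists z, lo < z < hi /\ slope f x y = df z.
Proof.
  intros Hd.
  assert (Hlt : forall x y, lo < x < hi -> lo < y < hi -> x < y ->
                  exists z, lo < z < hi /\ slope f x y = df z).
  { intros x y Hx Hy Hxy.
    destruct (MVT_cor2 f df x y Hxy) as [z [E Hz]]; [intros z Hz; apply Hd; lra |].
    exists z; split; [lra |]; unfold slope; rewrite E; field; lra. }
  intros x y Hx Hy Hxy.
  destruct (Rtotal_order x y) as [H | [H | H]]; [auto | contradiction |].
  rewrite slope_sym by auto; apply Hlt; auto.
Qed.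

Lemma holder_diff_le a b tau C h x y r :
  0 < tau ->
  (forall x y, in_I a b x -> in_I a b y -> x <> y ->
     Rabs (h x - h y) <= C * Rpower (Rabs (x - y)) tau) ->
  in_I a b x -> in_I a b y -> Rabs (x - y) <= r -> 0 < r ->
  h x - h y <= Rabs C * Rpower r tau.
Proof.
  intros Htau Hh Hx Hy Hxy Hr.
  pose proof (Rpower_pos r tau).
  destruct (Req_dec x y) as [<- | Hne].
  { rewrite Rminus_diag; apply Rmult_le_pos; [apply Rabs_pos | lra]. }
  apply Rle_trans with (Rabs (h x - h y)); [apply Rle_abs |].
  apply Rle_trans with (C * Rpower (Rabs (x - y)) tau); [apply Hh; auto |].
  apply Rle_trans with (Rabs C * Rpower (Rabs (x - y)) tau).
  - apply Rmult_le_compat_r; [left; apply Rpower_pos | apply Rle_abs].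
  - apply Rmult_le_compat_l; [apply Rabs_pos |].
    apply Rle_Rpower_l; [lra | split; [apply Rabs_pos_lt; lra | auto]].
Qed.

(* The derivative is bounded below by some d > 0, and a slope on an interval of length
   h is a value of it at distance less than h from any other, so M = |C| / d works. *)
Lemma diff1tau_holder_distortion a b tau f :
  a < b -> 0 < tau -> diff1tau a b tau f -> exists M, 0 <= M /\ holder_distortion a b tau M f.
Proof.
  intros Hab Htau [_ [df [Hd [Hpos [C HC]]]]].
  destruct (holder_pos_bounded_below a b tau C df) as [d [Hd0 Hdl]]; auto; [lra |].
  pose proof (derivable_pt_lim_interior a b f df Hd) as Hder.
  set (M := Rabs C / d).
  assert (HM : 0 <= M)
    by (unfold M, Rdiv; apply Rmult_le_pos; [apply Rabs_pos | left; apply Rinv_0_lt_compat; lra]).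
  exists M; split; auto.
  intros lo hi Hlo Hhi x y u v Hx Hy Hu Hv Hxy Huv.
  assert (Hder' : forall z, lo < z < hi -> derivable_pt_lim f z (df z))
    by (intros z Hz; apply Hder; lra).
  destruct (slope_mvt f df lo hi Hder' x y Hx Hy Hxy) as [z1 [Hz1 ->]].
  destruct (slope_mvt f df lo hi Hder' u v Hu Hv Huv) as [z2 [Hz2 ->]].
  assert (Iz2 : in_I a b z2) by (unfold in_I; lra).
  pose proof (holder_diff_le a b tau C df z1 z2 (hi - lo) Htau HC
                ltac:(unfold in_I; lra) Iz2
                ltac:(unfold Rabs; destruct Rcase_abs; lra) ltac:(lra)).
  pose proof (Hdl z2 Iz2).
  pose proof (Rpower_pos (hi - lo) tau).
  assert (Rabs C <= M * df z2).
  { apply Rle_trans with (M * d); [right; unfold M; field; lra |].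
    apply Rmult_le_compat_l; lra. }
  nra.
Qed.

Fixpoint partial_sum (u : nat -> R) (n : nat) : R :=
  match n with O => 0 | S k => partial_sum u k + u k end.

Lemma partial_sum_le_lim u l :
  (forall n, 0 <= u n) -> Un_cv (sum_f_R0 u) l -> forall n, partial_sum u n <= l.
Proof.
  intros Hu Hl n.
  assert (Hsum : forall k, partial_sum u (S k) = sum_f_R0 u k).
  { intro k; induction k as [|k IH]; [simpl; ring |].
    change (partial_sum u (S k) + u (S k) = sum_f_R0 u (S k)); rewrite IH; reflexivity. }
  apply Rle_trans with (partial_sum u (S n)); [simpl; specialize (Hu n); lra |].
  rewrite Hsum; apply growing_ineq; auto.
  intro k; simpl; specialize (Hu (S k)); lra.
Qed.

Lemma series_term_lt u l : Un_cv (sum_f_R0 u) l -> forall eps, 0 < eps -> exists n, u n < eps.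
Proof.
  intros Hl eps Heps.
  destruct (Hl (eps / 2)) as [N HN]; [lra |].
  exists (S N).
  pose proof (HN N (le_n N)) as H1; pose proof (HN (S N) (le_S _ _ (le_n N))) as H2.
  unfold R_dist in *; simpl in H2.
  unfold Rabs in *; repeat destruct Rcase_abs; lra.
Qed.

Lemma one_plus_pow_le_exp x m : 0 <= x -> (1 + x) ^ m <= exp (x * INR m).
Proof.
  intros Hx; induction m as [|m IH]; [simpl; rewrite Rmult_0_r, exp_0; lra |].
  rewrite S_INR, Rmult_plus_distr_l, Rmult_1_r, exp_plus; simpl.
  rewrite Rmult_comm; apply Rmult_le_compat; try lra.
  - apply pow_le; lra.
  - apply exp_ineq1_le.
Qed.

Lemma one_plus_pow_le_exp1 x m : 0 <= x -> x * INR m <= 1 -> (1 + x) ^ m <= exp 1.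
Proof.
  intros Hx Hxm; apply Rle_trans with (exp (x * INR m)); [apply one_plus_pow_le_exp; auto |].
  apply exp_le; auto.
Qed.

Section Iterates_along_words.

Variables (a b tau M p q l : R) (s : nat -> R -> R) (c : R -> R).
Hypotheses (Hp : a <= p) (Hpq : p < q) (Hq : q <= b) (HM : 0 <= M).
Hypothesis s_maps : forall n, (1 <= n)%nat -> maps_to (in_I a b) (in_I a b) (s n).
Hypothesis s_incr : forall n, (1 <= n)%nat -> increasing_on (in_I a b) (s n).
Hypothesis s_holder : forall n, (1 <= n)%nat -> holder_distortion a b tau M (s n).
Hypothesis c_comm : forall n, (1 <= n)%nat -> commute_on (in_I a b) c (s n).
Hypothesis c_incr : increasing_on (in_I a b) c.
Hypothesis c_holder : holder_distortion a b tau M c.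
Hypothesis c_maps_J : maps_to (oint p q) (oint p q) c.

Let len n := Rpower (word s n q - word s n p) tau.

Hypothesis len_summable : Un_cv (sum_f_R0 len) l.

Lemma word_bounds n : in_I a b (word s n p) /\ in_I a b (word s n q).
Proof. split; apply maps_to_word; auto; unfold in_I; lra. Qed.

Lemma increasing_on_word_J n : increasing_on (oint p q) (word s n).
Proof. exact (increasing_on_oint a b p q _ Hp Hq (increasing_on_word _ s s_maps s_incr n)). Qed.

Lemma word_maps_to_oint n : maps_to (oint p q) (oint (word s n p) (word s n q)) (word s n).
Proof.
  intros x [Hx1 Hx2]; pose proof (increasing_on_word _ s s_maps s_incr n) as HW.
  split; apply HW; unfold in_I; lra.
Qed.

Lemma word_distortion n : distortion_bound (word s n) (oint p q) (exp (M * partial_sum len n)).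
Proof.
  induction n as [|n IH].
  - simpl; rewrite Rmult_0_r, exp_0; exact (distortion_bound_id _).
  - destruct (word_bounds n) as [[HWp _] [_ HWq]].
    apply (distortion_bound_le _ _ ((1 + M * len n) * exp (M * partial_sum len n))).
    + exact (increasing_on_word_J (S n)).
    + simpl; rewrite Rmult_plus_distr_l, exp_plus, (Rmult_comm (exp _)).
      apply Rmult_le_compat_r; [left; apply exp_pos | apply exp_ineq1_le].
    + apply (distortion_bound_comp _ (oint (word s n p) (word s n q)) (word s n) (s (S n))).
      * apply word_maps_to_oint.
      * apply increasing_on_word_J.
      * exact (increasing_on_oint a b _ _ _ HWp HWq (s_incr (S n) ltac:(lia))).
      * exact IH.
      * exact (s_holder (S n) ltac:(lia) _ _ HWp HWq).
Qed.

Lemma iter_distortion_on_word_image n m :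
  distortion_bound (Nat.iter m c) (img (word s n) (oint p q)) ((1 + M * len n) ^ m).
Proof.
  destruct (word_bounds n) as [[HWp _] [_ HWq]].
  assert (Hsub : set_sub (img (word s n) (oint p q)) (oint (word s n p) (word s n q)))
    by (intros y [x [Hx <-]]; apply word_maps_to_oint; auto).
  apply distortion_bound_iter.
  - intros y [x [Hx <-]]; exists (c x); split; [auto |].
    symmetry; apply (commute_on_word _ s s_maps c c_comm), (oint_sub_in_I a b p q); auto.
  - exact (increasing_on_sub _ _ _ Hsub (increasing_on_oint a b _ _ c HWp HWq c_incr)).
  - exact (distortion_bound_sub _ _ _ _ Hsub (c_holder _ _ HWp HWq)).
Qed.

Lemma iter_distortion_bounded m :
  distortion_bound (Nat.iter m c) (oint p q) (exp (M * l) * exp (M * l) * exp 1).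
Proof.
  set (y := M * INR m).
  assert (Hy : 0 <= y) by (apply Rmult_le_pos; [auto | apply pos_INR]).
  destruct (series_term_lt len l len_summable (/ (y + 1))) as [n Hn];
    [apply Rinv_0_lt_compat; lra |].
  assert (Hlen : 0 < len n) by apply Rpower_pos.
  assert (HK : exp (M * partial_sum len n) <= exp (M * l)).
  { apply exp_le, Rmult_le_compat_l; auto.
    apply partial_sum_le_lim; auto; intro k; left; apply Rpower_pos. }
  assert (HL : (1 + M * len n) ^ m <= exp 1).
  { apply one_plus_pow_le_exp1; [nra |].
    replace (M * len n * INR m) with (y * len n) by (unfold y; ring).
    assert (y * / (y + 1) < 1).
    { apply (Rmult_lt_reg_r (y + 1)); [lra |]; rewrite Rmult_assoc, Rinv_l by lra; lra. }
    assert (y * len n <= y * / (y + 1)) by (apply Rmult_le_compat_l; lra).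
    lra. }
  assert (Hc_J : increasing_on (oint p q) c) by exact (increasing_on_oint a b p q c Hp Hq c_incr).
  apply (distortion_bound_le _ _
    (exp (M * partial_sum len n) * exp (M * partial_sum len n) * (1 + M * len n) ^ m)).
  - exact (increasing_on_iter _ c c_maps_J Hc_J m).
  - pose proof (exp_pos (M * partial_sum len n)).
    assert (0 <= (1 + M * len n) ^ m) by (apply pow_le; nra).
    apply Rmult_le_compat; [apply Rmult_le_pos | | apply Rmult_le_compat |]; lra.
  - apply (distortion_bound_conj _ _ (word s n)).
    + exact (maps_to_iter _ c c_maps_J m).
    + exact (increasing_on_iter _ c c_maps_J Hc_J m).
    + apply increasing_on_word_J.
    + apply commute_on_iter; [exact c_maps_J |].
      intros x Hx; apply (commute_on_word _ s s_maps c c_comm), (oint_sub_in_I a b p q); auto.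
    + apply word_distortion.
    + apply iter_distortion_on_word_image.
Qed.

End Iterates_along_words.

Lemma bounded_sequence_drift_absurd (f : nat -> R) p q d k :
  0 < k -> (forall m, p < f m < q) -> (forall m, k <= d * (f m - f (S m))) -> False.
Proof.
  intros Hk Hf Hdrift.
  assert (Htel : forall N, INR N * k <= d * (f O - f N)).
  { induction N as [|N IH]; [simpl; lra |].
    rewrite S_INR; specialize (Hdrift N); lra. }
  destruct (INR_archimed k (Rabs d * (q - p)) Hk) as [N HN].
  specialize (Htel N).
  assert (d * (f O - f N) <= Rabs d * (q - p)).
  { apply Rle_trans with (Rabs (d * (f O - f N))); [apply Rle_abs |].
    rewrite Rabs_mult; apply Rmult_le_compat_l; [apply Rabs_pos |].
    pose proof (Hf O); pose proof (Hf N); unfold Rabs; destruct Rcase_abs; lra. }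
  lra.
Qed.

(* c^m maps [y, c y] onto [x0, c x0] and [x0, c x0] onto [c^m x0, c^m (c x0)]. *)
Lemma iterate_displacement_product p q c D m x0 y :
  maps_to (oint p q) (oint p q) c -> increasing_on (oint p q) c ->
  distortion_bound (Nat.iter m c) (oint p q) D ->
  oint p q x0 -> oint p q y -> Nat.iter m c y = x0 -> c x0 <> x0 ->
  let d := c x0 - x0 in
  0 < d * (c y - y) /\ d * d <= D * ((Nat.iter m c (c x0) - Nat.iter m c x0) * (c y - y)).
Proof.
  intros Hc Hci Hdist Hx0 Hy Hmy Hne d.
  assert (Hmcy : Nat.iter m c (c y) = c x0) by (rewrite <- Nat.iter_succ_r; simpl; congruence).
  assert (Hyne : y <> c y) by (intros E; apply Hne; rewrite <- Hmcy, <- E; auto).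
  assert (Hx0ne : x0 <> c x0) by auto.
  pose proof (Hdist y (c y) x0 (c x0) Hy (Hc y Hy) Hx0 (Hc x0 Hx0) Hyne Hx0ne) as Hb.
  pose proof (increasing_on_iter _ c Hc Hci m) as Hmi.
  pose proof (slope_pos _ _ y (c y) Hmi Hy (Hc y Hy) Hyne).
  pose proof (slope_pos _ _ x0 (c x0) Hmi Hx0 (Hc x0 Hx0) Hx0ne).
  set (al := Nat.iter m c (c x0) - Nat.iter m c x0).
  set (ga := c y - y).
  assert (E1 : slope (Nat.iter m c) y (c y) * ga = d)
    by (unfold slope, ga, d; rewrite Hmy, Hmcy; field; lra).
  assert (E2 : slope (Nat.iter m c) x0 (c x0) * d = al)
    by (unfold slope, al, d; field; lra).
  assert (Hga : ga <> 0) by (unfold ga; intro E; apply Hyne; lra).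
  assert (Hdga : 0 < d * ga).
  { rewrite <- E1, Rmult_assoc; apply Rmult_lt_0_compat; [lra | apply Rsqr_pos_lt; auto]. }
  split; [exact Hdga |].
  replace (d * d) with (slope (Nat.iter m c) y (c y) * (d * ga)) by (rewrite <- E1 at 2; ring).
  replace (D * (al * ga)) with ((D * slope (Nat.iter m c) x0 (c x0)) * (d * ga))
    by (rewrite <- E2; ring).
  apply Rmult_le_compat_r; lra.
Qed.

Lemma iterate_displacement_lower_bound p q c D m x0 y :
  0 < D -> maps_to (oint p q) (oint p q) c -> increasing_on (oint p q) c ->
  distortion_bound (Nat.iter m c) (oint p q) D ->
  oint p q x0 -> oint p q y -> Nat.iter m c y = x0 -> c x0 <> x0 ->
  let d := c x0 - x0 in
  d * d * (d * d) <= D * (Rabs d * (q - p)) * (d * (c y - y)).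
Proof.
  intros HD Hc Hci Hdist Hx0 Hy Hmy Hne d.
  destruct (iterate_displacement_product p q c D m x0 y Hc Hci Hdist Hx0 Hy Hmy Hne)
    as [Hdga Hprod].
  fold d in Hdga, Hprod.
  set (al := Nat.iter m c (c x0) - Nat.iter m c x0) in Hprod.
  assert (Hal : d * al <= Rabs d * (q - p)).
  { apply Rle_trans with (Rabs (d * al)); [apply Rle_abs |].
    rewrite Rabs_mult; apply Rmult_le_compat_l; [apply Rabs_pos |].
    pose proof (maps_to_iter _ c Hc m x0 Hx0).
    pose proof (maps_to_iter _ c Hc m (c x0) (Hc x0 Hx0)).
    unfold al, oint in *; unfold Rabs; destruct Rcase_abs; lra. }
  apply Rle_trans with ((d * al) * (D * (d * (c y - y)))).
  - replace ((d * al) * (D * (d * (c y - y)))) with ((d * d) * (D * (al * (c y - y)))) by ring.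
    apply Rmult_le_compat_l; [apply Rle_0_sqr | exact Hprod].
  - replace (D * (Rabs d * (q - p)) * (d * (c y - y)))
      with ((Rabs d * (q - p)) * (D * (d * (c y - y)))) by ring.
    apply Rmult_le_compat_r; [apply Rmult_le_pos |]; lra.
Qed.

Lemma iterates_bounded_distortion_fixed p q c g D :
  0 < D -> maps_to (oint p q) (oint p q) c -> increasing_on (oint p q) c ->
  maps_to (oint p q) (oint p q) g -> (forall y, oint p q y -> c (g y) = y) ->
  (forall m, distortion_bound (Nat.iter m c) (oint p q) D) ->
  forall x, oint p q x -> c x = x.
Proof.
  intros HD Hc Hci Hg Hcg Hdist x0 Hx0.
  destruct (Req_dec (c x0) x0) as [E | Hne]; [exact E | exfalso].
  set (d := c x0 - x0).
  assert (Hd : d <> 0) by (unfold d; intro E; apply Hne; lra).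
  assert (HB : 0 < D * (Rabs d * (q - p))).
  { destruct Hx0; apply Rmult_lt_0_compat; [| apply Rmult_lt_0_compat; [apply Rabs_pos_lt |]];
      auto; lra. }
  apply (bounded_sequence_drift_absurd (fun m => Nat.iter m g x0) p q d
           (d * d * (d * d) / (D * (Rabs d * (q - p))))).
  - apply Rdiv_lt_0_compat; [apply Rmult_lt_0_compat; apply Rsqr_pos_lt |]; auto.
  - intro m; apply maps_to_iter; auto.
  - intro m; simpl.
    set (y := g (Nat.iter m g x0)).
    assert (Hy : oint p q y) by (apply Hg, maps_to_iter; auto).
    replace (Nat.iter m g x0) with (c y) at 1 by (apply Hcg, maps_to_iter; auto).
    apply (Rmult_le_reg_r (D * (Rabs d * (q - p)))); [exact HB |].
    unfold Rdiv; rewrite Rmult_assoc, Rinv_l, Rmult_1_r by lra.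
    rewrite (Rmult_comm (d * (c y - y))).
    apply (iterate_displacement_lower_bound p q c D (S m) x0 y); auto.
    unfold y; rewrite Nat.iter_succ_r, Hcg by (apply maps_to_iter; auto).
    apply (iter_cancel (oint p q)); auto.
Qed.

Lemma displaced_subinterval a b p q c x0 :
  cont_on a b c -> a <= p -> q <= b -> oint p q x0 -> c x0 <> x0 ->
  exists r, 0 < r /\ p < x0 - r /\ x0 + r < q /\
    forall z z', oint (x0 - r) (x0 + r) z -> oint (x0 - r) (x0 + r) z' -> c z <> z'.
Proof.
  intros Hcont Hp Hq [Hx1 Hx2] Hne.
  set (e := Rabs (c x0 - x0)).
  assert (He : 0 < e) by (apply Rabs_pos_lt; intro E; apply Hne; lra).
  destruct (Hcont x0 ltac:(unfold in_I; lra) (e / 3) ltac:(lra)) as [delta [Hdelta Hc]].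
  set (r := Rmin (Rmin delta (e / 3)) (Rmin (x0 - p) (q - x0)) / 2).
  pose proof (Rmin_l (Rmin delta (e / 3)) (Rmin (x0 - p) (q - x0))).
  pose proof (Rmin_r (Rmin delta (e / 3)) (Rmin (x0 - p) (q - x0))).
  pose proof (Rmin_l delta (e / 3)); pose proof (Rmin_r delta (e / 3)).
  pose proof (Rmin_l (x0 - p) (q - x0)); pose proof (Rmin_r (x0 - p) (q - x0)).
  assert (Hr : 0 < r) by (unfold r; apply Rdiv_lt_0_compat; [repeat apply Rmin_pos |]; lra).
  assert (Hrd : r < delta) by (unfold r; lra).
  assert (Hre : r < e / 3) by (unfold r; lra).
  assert (Hpr : p < x0 - r) by (unfold r; lra).
  assert (Hrq : x0 + r < q) by (unfold r; lra).
  exists r; split; [| split; [| split]]; auto.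
  intros z z' [Hz1 Hz2] [Hz'1 Hz'2] E.
  assert (Hcz : Rabs (c z - c x0) < e / 3)
    by (apply Hc; [unfold in_I | unfold Rabs; destruct Rcase_abs]; lra).
  assert (Hz' : Rabs (z' - x0) < e / 3) by (unfold Rabs; destruct Rcase_abs; lra).
  rewrite E, Rabs_minus_sym in Hcz.
  pose proof (Rabs_triang (c x0 - z') (z' - x0)) as Htri.
  replace (c x0 - z' + (z' - x0)) with (c x0 - x0) in Htri by ring.
  fold e in Htri; lra.
Qed.

Lemma img_commute_invariant (A B : rset) (c W : R -> R) :
  set_sub A B -> commute_on B c W -> set_eq (img c A) A -> set_eq (img c (img W A)) (img W A).
Proof.
  intros HAB Hc HcA y; split.
  - intros [z [[x [Hx <-]] <-]].
    exists (c x); split; [apply HcA; exists x; auto | symmetry; apply Hc; auto].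
  - intros [x [Hx <-]]; destruct (proj2 (HcA x) Hx) as [x' [Hx' <-]].
    exists (W x'); split; [exists x'; auto | apply Hc; auto].
Qed.

Lemma img_commute_disjoint (A B : rset) (c W : R -> R) :
  set_sub A B -> maps_to A B c -> increasing_on B W -> commute_on B c W ->
  (forall z z', A z -> A z' -> c z <> z') -> set_disj (img c (img W A)) (img W A).
Proof.
  intros HAB Hm HW Hc Hdisp y [[z [[x [Hx <-]] <-]] [x' [Hx' E]]].
  rewrite Hc in E by auto.
  apply (increasing_on_neq B W (c x) x' HW (Hm x Hx) (HAB x' Hx')); [| congruence].
  apply Hdisp; auto.
Qed.

Lemma commuting_displacement_nesting a b S tau p q s c :
  (forall f, In f S -> homeo_plus a b f) -> a <= p -> p < q -> q <= b ->
  (forall n, (1 <= n)%nat -> In (s n) S) ->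
  summable (fun n => Rpower (word s n q - word s n p) tau) ->
  homeo_plus a b c -> (forall f, In f S -> commute_on (in_I a b) c f) ->
  set_eq (img c (oint p q)) (oint p q) -> (exists x, oint p q x /\ c x <> x) ->
  nesting a b (c :: S) 2 tau.
Proof.
  intros HS Hp Hpq Hq Hs Hsum Hc Hcomm HcJ [x0 [Hx0 Hne]].
  destruct (displaced_subinterval a b p q c x0) as [r [Hr [Hpr [Hrq Hdisp]]]]; auto.
  { destruct Hc as [_ [[g [_ [_ [_ [Hcont _]]]]] _]]; exact Hcont. }
  assert (Hsm : forall n, (1 <= n)%nat -> maps_to (in_I a b) (in_I a b) (s n))
    by (intros n Hn; apply homeo_plus_maps_to, HS, Hs; auto).
  assert (HJ2 : set_sub (oint (x0 - r) (x0 + r)) (in_I a b)) by (apply oint_sub_in_I; lra).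
  exists (fun i => match i with 1%nat => (p, q) | _ => (x0 - r, x0 + r) end), s.
  split; [| split; [| split; [| split]]].
  - intros i Hi; destruct i as [|[|[|i]]]; try lia; simpl; lra.
  - intros i Hi; assert (i = 1%nat) by lia; subst i; simpl; split.
    + intros z [Hz1 Hz2]; split; lra.
    + intros E; destruct (proj2 (E ((p + (x0 - r)) / 2))) as [H _]; [split |]; lra.
  - intros n Hn; right; auto.
  - exact Hsum.
  - intros i n Hi; assert (i = 2%nat) by lia; subst i; simpl.
    assert (HW : commute_on (in_I a b) c (word s n))
      by (apply commute_on_word; auto; intros k Hk; apply Hcomm, Hs; auto).
    exists c; split; [left; reflexivity | split].
    + apply (img_commute_disjoint _ (in_I a b)); auto.
      * intros z Hz; apply (homeo_plus_maps_to a b c Hc); auto.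
      * apply increasing_on_word; auto; intros k Hk; apply homeo_plus_increasing, HS, Hs; auto.
    + apply (img_commute_invariant _ (in_I a b)); auto; apply oint_sub_in_I; auto.
Qed.

Lemma homeo_plus_interval_inverse a b p q c :
  homeo_plus a b c -> a <= p -> q <= b -> set_eq (img c (oint p q)) (oint p q) ->
  exists g, maps_to (oint p q) (oint p q) c /\ maps_to (oint p q) (oint p q) g /\
    (forall y, oint p q y -> c (g y) = y).
Proof.
  intros [_ [[g [_ [Hgc [Hcg _]]]] _]] Hp Hq HcJ.
  pose proof (oint_sub_in_I a b p q Hp Hq) as HJ.
  exists g; split; [| split].
  - intros x Hx; apply HcJ; exists x; auto.
  - intros y Hy; destruct (proj2 (HcJ y) Hy) as [x [Hx <-]]; rewrite Hgc; auto.
  - intros y Hy; apply Hcg; auto.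
Qed.

Theorem lemma3p7 (a b : R) (hab : a < b)
  (S : list (R -> R)) (hS : forall f, In f S -> homeo_plus a b f)
  (tau : R) (htau : 0 < tau < 1)
  (p q : R) (hpq : a <= p /\ p < q /\ q <= b)
  (s : nat -> R -> R) (hs : forall n, (1 <= n)%nat -> In (s n) S)
  (hsum : summable (fun n => Rpower (word s n q - word s n p) tau))
  (c : R -> R) (hc : homeo_plus a b c)
  (hcomm : forall f, In f S -> forall x, in_I a b x -> c (f x) = f (c x))
  (hcJ : set_eq (img c (oint p q)) (oint p q))
  (hcnt : exists x, oint p q x /\ c x <> x) :
  nesting a b (c :: S) 2 tau /\
  ~ (forall f, In f (c :: S) -> diff1tau a b tau f).
Proof.
  destruct hpq as [Hp [Hpq Hq]].
  split.
  { exact (commuting_displacement_nesting a b S tau p q s c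
             hS Hp Hpq Hq hs hsum hc hcomm hcJ hcnt). }
  intros Hdiff.
  destruct (holder_distortion_uniform a b tau (c :: S)) as [M [HM Hhol]].
  { intros f Hf; split; [apply homeo_plus_increasing, (Hdiff f Hf) |].
    apply diff1tau_holder_distortion; auto; lra. }
  destruct (homeo_plus_interval_inverse a b p q c hc Hp Hq hcJ) as [g [HcJ [HgJ Hcg]]].
  destruct hsum as [l Hl], hcnt as [x0 [Hx0 Hne]].
  apply Hne, (iterates_bounded_distortion_fixed p q c g (exp (M * l) * exp (M * l) * exp 1));
    auto.
  - apply Rmult_lt_0_compat; [apply Rmult_lt_0_compat |]; apply exp_pos.
  - exact (increasing_on_oint a b p q c Hp Hq (homeo_plus_increasing a b c hc)).
  - intro m; apply (iter_distortion_bounded a b tau M p q l s c); auto.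
    + intros n Hn; apply homeo_plus_maps_to, hS, hs; auto.
    + intros n Hn; apply homeo_plus_increasing, hS, hs; auto.
    + intros n Hn; apply Hhol; right; apply hs; auto.
    + intros n Hn; exact (hcomm (s n) (hs n Hn)).
    + apply homeo_plus_increasing; auto.
    + apply Hhol; left; reflexivity.
Qed.
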